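(* Let $R$ be a partial algebra over an algebraically closed field $k$ in which every element is algebraic over $k$ (e.g. a finite-dimensional $k$-algebra with its standard partial algebra structure). Then a morphism of partial $k$-algebras $R\to k$ is uniquely determined by its restriction to the set of idempotents of $R$ (elements $e$ with $e\cdot e=e$).
   Context: A partial $k$-algebra is a set $R$ with a reflexive symmetric relation $\perp$ (commeasurability), partial operations $+,\cdot$ defined on pairs $a\perp b$, scalar multiplication $k\times R\to R$, and elements $0,1$ such that: every $a$ is commeasurable with $0$ and $1$; if $a_1,a_2,a_3$ are pairwise commeasurable and $\lambda\in k$ then $a_1+a_2$, $a_1a_2$, $\lambda a_1$ are commeasurable with $a_3$ (resp. $a_2$); for pairwise commeasurable $a_1,a_2,a_3$ the values of all commutative polynomials in them form a commutative $k$-algebra. A full $k$-algebra has the standard partial structure with $a\perp b$ iff $ab=ba$. An element $a$ is algebraic if $k[a]$ (values of polynomials in $a$) is finite-dimensional over $k$. A morphism $f\colon R\to k$ satisfies, for $a\perp b$, $\lambda\in k$: $f(\lambda a)=\lambda f(a)$, $f(a+b)=f(a)+f(b)$, $f(ab)=f(a)f(b)$, $f(0)=0$, $f(1)=1$. *)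

From HB Require Import structures.
From mathcomp Require Import all_boot all_algebra.
Set Implicit Arguments. Unset Strict Implicit. Unset Printing Implicit Defensive.
Import GRing.Theory.
Local Open Scope ring_scope.

(* Partial operations are modelled as total functions whose values are only
   ever used (in the axioms and in the notion of morphism) on commeasurable
   pairs; values on non-commeasurable pairs are irrelevant junk. *)

Inductive pterm (k : Type) (n : nat) : Type :=
  | PVar of 'I_n
  | PZero
  | POne
  | PAdd of pterm k n & pterm k n
  | PMul of pterm k n & pterm k n
  | PScale of k & pterm k n.

Record PartialAlg (k : fieldType) := {
  pcarrier :> Type;
  pcomm : pcarrier -> pcarrier -> Prop;
  padd : pcarrier -> pcarrier -> pcarrier;
  pmul : pcarrier -> pcarrier -> pcarrier;
  pscale : k -> pcarrier -> pcarrier;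
  pzero : pcarrier;
  pone : pcarrier;
  pcomm_refl : forall a, pcomm a a;
  pcomm_sym : forall a b, pcomm a b -> pcomm b a;
  pcomm0 : forall a, pcomm a pzero;
  pcomm1 : forall a, pcomm a pone;
  pcomm_closed : forall (a1 a2 a3 : pcarrier) (l : k),
    pcomm a1 a2 -> pcomm a1 a3 -> pcomm a2 a3 ->
    [/\ pcomm (padd a1 a2) a3, pcomm (pmul a1 a2) a3 & pcomm (pscale l a1) a2];
  (* for pairwise commeasurable a1 a2 a3, the values of all polynomials in
     them form a commutative k-algebra (see pcomm_poly_alg below) *)
  pcomm_poly : forall (env : 'I_3 -> pcarrier),
    (forall i j, pcomm (env i) (env j)) ->
    let ev := fix ev (t : pterm k 3) : pcarrier :=
      match t with
      | PVar i => env i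
      | PZero => pzero
      | POne => pone
      | PAdd t1 t2 => padd (ev t1) (ev t2)
      | PMul t1 t2 => pmul (ev t1) (ev t2)
      | PScale c t1 => pscale c (ev t1)
      end in
    let S x := exists t, ev t = x in
    (* the value set is pairwise commeasurable (so operations are defined) *)
    (forall x y, S x -> S y -> pcomm x y) /\
    (forall x y z, S x -> S y -> S z ->
      [/\ padd (padd x y) z = padd x (padd y z),
          padd x y = padd y x,
          padd pzero x = x &
          padd x (pscale (-1) x) = pzero] /\
      [/\ pmul (pmul x y) z = pmul x (pmul y z),
          pmul x y = pmul y x,
          pmul pone x = x &
          pmul x (padd y z) = padd (pmul x y) (pmul x z)]) /\
    (forall (l m : k) x y, S x -> S y ->
      [/\ pscale l (padd x y) = padd (pscale l x) (pscale l y),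
          pscale (l + m) x = padd (pscale l x) (pscale m x),
          pscale (l * m) x = pscale l (pscale m x),
          pscale 1 x = x &
          pscale l (pmul x y) = pmul (pscale l x) y])
}.

Section Defs.
Variables (k : fieldType) (R : PartialAlg k).

Fixpoint peval1 (a : R) (t : pterm k 1) : R :=
  match t with
  | PVar _ => a
  | PZero => pzero R
  | POne => pone R
  | PAdd t1 t2 => padd (peval1 a t1) (peval1 a t2)
  | PMul t1 t2 => pmul (peval1 a t1) (peval1 a t2)
  | PScale c t1 => pscale c (peval1 a t1)
  end.

Definition kpoly (a : R) (x : R) : Prop := exists t, peval1 a t = x.

Definition lincomb (s : seq (k * R)) : R :=
  foldr (fun p acc => padd (pscale p.1 p.2) acc) (pzero R) s.

(* a is algebraic: k[a] is finite-dimensional over k, i.e. spanned by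
   finitely many of its elements *)
Definition algebraic (a : R) : Prop :=
  exists vs : seq R, (forall i, (i < size vs)%N -> kpoly a (nth (pzero R) vs i)) /\
    forall x, kpoly a x -> exists cs : seq k,
      size cs = size vs /\ x = lincomb (zip cs vs).

Definition pidempotent (e : R) : Prop := pmul e e = e.

Definition is_morphism (f : R -> k) : Prop :=
  [/\ forall l a, f (pscale l a) = l * f a,
      forall a b, pcomm a b -> f (padd a b) = f a + f b,
      forall a b, pcomm a b -> f (pmul a b) = f a * f b,
      f (pzero R) = 0 & f (pone R) = 1].

End Defs.

(* An algebraic element a generates a commutative k-algebra k[a], and any
   morphism f restricts to the evaluation p(a) |-> p(f a) on it; in particular
   f a is a root of a nonzero annihilating polynomial p of a. If f a <> g a,
   the Bezout identity between the cofactor of the (X - f a)-part of p and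
   that part yields a polynomial u with u^2 = u modulo p, u(f a) = 1 and
   u(g a) = 0, so e = u(a) is an idempotent of R separating f from g. *)

From HB Require Import structures.
From mathcomp Require Import all_boot all_algebra.
From mathcomp Require Import boolp ring.
Set Implicit Arguments. Unset Strict Implicit. Unset Printing Implicit Defensive.
Import GRing.Theory.
Local Open Scope ring_scope.

Lemma horner_alg_poly (F : fieldType) (A : algType F) (x : A) n (d : nat -> F) :
  horner_alg x (\poly_(i < n) d i) = \sum_(i < n) d i *: x ^+ i.
Proof.
rewrite poly_def rmorph_sum; apply: eq_bigr => i _.
by rewrite -mul_polyC rmorphM /= horner_algC rmorphXn /= horner_algX -scalerAl mul1r.
Qed.

Lemma separating_idempotent_poly (F : fieldType) (p : {poly F}) (x y : F) :
  p != 0 -> root p x -> root p y -> x != y ->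
  exists u : {poly F}, [/\ p %| u * u - u, u.[x] = 1 & u.[y] = 0].
Proof.
move=> p_neq0 px py x_neq_y.
have [m [q /implyP/(_ p_neq0) qx_neq0 def_p]] := multiplicity_XsubC p x.
have m_gt0 : (0 < m)%N.
  by case: m def_p => // def_p; move: px; rewrite def_p mulr1; apply/contraLR.
have qy : q.[y] = 0.
  move: py; rewrite def_p rootE hornerM horner_exp hornerXsubC mulf_eq0 expf_eq0.
  by rewrite subr_eq0 [y == x]eq_sym (negbTE x_neq_y) andbF orbF => /eqP.
have /Bezout_eq1_coprimepP [[s t] /= bezout] :
    coprimep q (('X - x%:P) ^+ m) by rewrite coprimep_expr // coprimep_XsubC.
(* With s q + t (X - x)^m = 1, the polynomial u = s q satisfies u - u^2 = s t p. *)
exists (s * q); split.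
- apply/dvdpP; exists (- (s * t)); rewrite def_p.
  have -> : s * q * (s * q) - s * q = - (s * q) * (1 - s * q) by ring.
  by rewrite -bezout; ring.
- have := congr1 (horner^~ x) bezout.
  rewrite hornerD !hornerM horner_exp hornerXsubC subrr expr0n eqn0Ngt m_gt0.
  by rewrite mulr0 addr0 hornerC => ->.
- by rewrite hornerM qy mulr0.
Qed.

Lemma span_dependent (F : fieldType) (V : lmodType F) n
    (w : 'I_n.+1 -> V) (v : 'I_n -> V) (M : 'M[F]_(n.+1, n)) :
  (forall i, w i = \sum_j M i j *: v j) ->
  exists2 d : 'rV[F]_n.+1, d != 0 & \sum_i d 0 i *: w i = 0.
Proof.
move=> def_w.
have /rowV0Pn [d /sub_kermxP dM d_neq0] : kermx M != 0.
  rewrite kermx_eq0; apply: contraL (rank_leq_col M) => /eqP ->.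
  by rewrite ltnn.
exists d => //; under eq_bigr => i _ do rewrite def_w scaler_sumr.
rewrite exchange_big /=; apply: big1 => j _.
under eq_bigr => i _ do rewrite scalerA.
rewrite -scaler_suml.
by have := congr1 (fun m : 'M[F]_(1, n) => m 0 j) dM; rewrite !mxE => ->; rewrite scale0r.
Qed.

Lemma morphism_one_neq0 (k : fieldType) (R : PartialAlg k) (f : R -> k) :
  is_morphism f -> pone R <> pzero R.
Proof.
case=> _ _ _ f0 f1 one_eq0; move: f1; rewrite one_eq0 f0 => /eqP.
by rewrite eq_sym oner_eq0.
Qed.

Section SingleGenerator.
Variables (k : fieldType) (R : PartialAlg k) (a : R).

Fixpoint peval_diag (t : pterm k 3) : R :=
  match t with
  | PVar _ => a
  | PZero => pzero R
  | POne => pone R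
  | PAdd t1 t2 => padd (peval_diag t1) (peval_diag t2)
  | PMul t1 t2 => pmul (peval_diag t1) (peval_diag t2)
  | PScale c t1 => pscale c (peval_diag t1)
  end.

Fixpoint pterm_lift (t : pterm k 1) : pterm k 3 :=
  match t with
  | PVar _ => PVar _ ord0
  | PZero => PZero _ _
  | POne => POne _ _
  | PAdd t1 t2 => PAdd (pterm_lift t1) (pterm_lift t2)
  | PMul t1 t2 => PMul (pterm_lift t1) (pterm_lift t2)
  | PScale c t1 => PScale c (pterm_lift t1)
  end.

Lemma peval_diag_lift t : peval_diag (pterm_lift t) = peval1 a t.
Proof. by elim: t => //= [t1 -> t2 ->|t1 -> t2 ->|c t ->]. Qed.

Lemma kpoly_diag x : kpoly a x -> exists t, peval_diag t = x.
Proof. by case=> t <-; exists (pterm_lift t); rewrite peval_diag_lift. Qed.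

(* The values of polynomials in a alone are those of the pcomm_poly axiom
   with all three variables set to a. *)
Let kpoly_axioms := @pcomm_poly k R (fun _ => a) (fun _ _ => @pcomm_refl k R a).

Lemma kpoly_pcomm x y : kpoly a x -> kpoly a y -> pcomm x y.
Proof. by move=> /kpoly_diag hx /kpoly_diag hy; case: kpoly_axioms => /(_ x y hx hy). Qed.

Lemma kpoly_add_axioms x y z : kpoly a x -> kpoly a y -> kpoly a z ->
  [/\ padd (padd x y) z = padd x (padd y z), padd x y = padd y x,
      padd (pzero R) x = x & padd x (pscale (-1) x) = pzero R].
Proof.
move=> /kpoly_diag hx /kpoly_diag hy /kpoly_diag hz.
by case: kpoly_axioms => _ [/(_ x y z hx hy hz) []].
Qed.

Lemma kpoly_mul_axioms x y z : kpoly a x -> kpoly a y -> kpoly a z ->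
  [/\ pmul (pmul x y) z = pmul x (pmul y z), pmul x y = pmul y x,
      pmul (pone R) x = x & pmul x (padd y z) = padd (pmul x y) (pmul x z)].
Proof.
move=> /kpoly_diag hx /kpoly_diag hy /kpoly_diag hz.
by case: kpoly_axioms => _ [/(_ x y z hx hy hz) []].
Qed.

Lemma kpoly_scale_axioms (l m : k) x y : kpoly a x -> kpoly a y ->
  [/\ pscale l (padd x y) = padd (pscale l x) (pscale l y),
      pscale (l + m) x = padd (pscale l x) (pscale m x),
      pscale (l * m) x = pscale l (pscale m x), pscale 1 x = x &
      pscale l (pmul x y) = pmul (pscale l x) y].
Proof.
move=> /kpoly_diag hx /kpoly_diag hy.
by case: kpoly_axioms => _ [_ /(_ l m x y hx hy)].
Qed.

Lemma kpolyD x y : kpoly a x -> kpoly a y -> kpoly a (padd x y).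
Proof. by case=> t <- [u <-]; exists (PAdd t u). Qed.

Lemma kpolyM x y : kpoly a x -> kpoly a y -> kpoly a (pmul x y).
Proof. by case=> t <- [u <-]; exists (PMul t u). Qed.

Lemma kpolyZ c x : kpoly a x -> kpoly a (pscale c x).
Proof. by case=> t <-; exists (PScale c t). Qed.

Lemma kpoly0 : kpoly a (pzero R). Proof. by exists (PZero _ _). Qed.
Lemma kpoly1 : kpoly a (pone R). Proof. by exists (POne _ _). Qed.
Lemma kpolyX : kpoly a a. Proof. by exists (PVar _ ord0). Qed.

Hypothesis one_neq0 : pone R <> pzero R.

Definition kalg := {x : R | kpoly a x}.
HB.instance Definition _ := gen_eqMixin kalg.
HB.instance Definition _ := gen_choiceMixin kalg.

Lemma kalg_inj (x y : kalg) : sval x = sval y -> x = y.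
Proof. by case: x y => x px [y py] /= exy; subst y; rewrite (Prop_irrelevance px py). Qed.

Definition kalg_add (x y : kalg) : kalg := exist _ _ (kpolyD (svalP x) (svalP y)).
Definition kalg_mul (x y : kalg) : kalg := exist _ _ (kpolyM (svalP x) (svalP y)).
Definition kalg_scale c (x : kalg) : kalg := exist _ _ (kpolyZ c (svalP x)).
Definition kalg_opp (x : kalg) : kalg := kalg_scale (-1) x.
Definition kalg0 : kalg := exist _ _ kpoly0.
Definition kalg1 : kalg := exist _ _ kpoly1.
Definition kalgX : kalg := exist _ _ kpolyX.

Local Notation addP x y z := (kpoly_add_axioms (svalP x) (svalP y) (svalP z)).
Local Notation mulP x y z := (kpoly_mul_axioms (svalP x) (svalP y) (svalP z)).
Local Notation scaleP l m x y := (kpoly_scale_axioms l m (svalP x) (svalP y)).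

Lemma kalg_addA : associative kalg_add.
Proof. by move=> x y z; apply: kalg_inj; case: (addP x y z). Qed.
Lemma kalg_addC : commutative kalg_add.
Proof. by move=> x y; apply: kalg_inj; case: (addP x y x). Qed.
Lemma kalg_add0 : left_id kalg0 kalg_add.
Proof. by move=> x; apply: kalg_inj; case: (addP x x x). Qed.
Lemma kalg_addN : left_inverse kalg0 kalg_opp kalg_add.
Proof. by move=> x; rewrite kalg_addC; apply: kalg_inj; case: (addP x x x). Qed.

HB.instance Definition _ :=
  GRing.isZmodule.Build kalg kalg_addA kalg_addC kalg_add0 kalg_addN.

Lemma kalg_mulA : associative kalg_mul.
Proof. by move=> x y z; apply: kalg_inj; case: (mulP x y z). Qed.
Lemma kalg_mulC : commutative kalg_mul.
Proof. by move=> x y; apply: kalg_inj; case: (mulP x y x). Qed.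
Lemma kalg_mul1 : left_id kalg1 kalg_mul.
Proof. by move=> x; apply: kalg_inj; case: (mulP x x x). Qed.
Lemma kalg_mulDl : left_distributive kalg_mul kalg_add.
Proof.
move=> x y z; rewrite kalg_mulC (kalg_mulC x) (kalg_mulC y).
by apply: kalg_inj; case: (mulP z x y).
Qed.
Lemma kalg1_neq0 : kalg1 != kalg0.
Proof. by apply/eqP => /(congr1 sval). Qed.

HB.instance Definition _ := GRing.Zmodule_isComNzRing.Build kalg
  kalg_mulA kalg_mulC kalg_mul1 kalg_mulDl kalg1_neq0.

Lemma kalg_scaleA c d (x : kalg) :
  kalg_scale c (kalg_scale d x) = kalg_scale (c * d) x.
Proof. by apply: kalg_inj; case: (scaleP c d x x). Qed.
Lemma kalg_scale1 : left_id 1 kalg_scale.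
Proof. by move=> x; apply: kalg_inj; case: (scaleP 1 1 x x). Qed.
Lemma kalg_scaleDr : right_distributive kalg_scale kalg_add.
Proof. by move=> c x y; apply: kalg_inj; case: (scaleP c c x y). Qed.
Lemma kalg_scaleDl (x : kalg) :
  {morph kalg_scale^~ x : c d / c + d >-> kalg_add c d}.
Proof. by move=> c d; apply: kalg_inj; case: (scaleP c d x x). Qed.

HB.instance Definition _ := GRing.Zmodule_isLmodule.Build k kalg
  kalg_scaleA kalg_scale1 kalg_scaleDr kalg_scaleDl.

Lemma kalg_scaleAl c (x y : kalg) :
  kalg_scale c (kalg_mul x y) = kalg_mul (kalg_scale c x) y.
Proof. by apply: kalg_inj; case: (scaleP c c x y). Qed.

HB.instance Definition _ := GRing.Lmodule_isLalgebra.Build k kalg kalg_scaleAl.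
HB.instance Definition _ := GRing.Lalgebra_isComAlgebra.Build k kalg.

Definition to_kalg (x : R) : kalg :=
  if pselect (kpoly a x) is left kx then exist _ x kx else 0.

Lemma to_kalgK x : kpoly a x -> sval (to_kalg x) = x.
Proof. by rewrite /to_kalg; case: pselect. Qed.

Lemma lincomb_kalg (vs : seq R) (cs : seq k) :
    (forall i, (i < size vs)%N -> kpoly a (nth (pzero R) vs i)) ->
    size cs = size vs ->
  lincomb (zip cs vs) =
  sval (\sum_(j < size vs) nth 0 cs j *: to_kalg (nth (pzero R) vs j)).
Proof.
elim: vs cs => [|v vs IHvs] [|c cs] //= kvs; first by rewrite big_ord0.
case=> size_cs; rewrite big_ord_recl /= to_kalgK; last exact: (kvs 0%N).
by rewrite IHvs // => i lt_i; apply: (kvs i.+1).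
Qed.

Lemma algebraic_annihilator :
  algebraic a -> exists2 p : {poly k}, p != 0 & horner_alg kalgX p = 0.
Proof.
case=> vs [kvs span_vs]; set n := size vs.
have [cs def_cs] := choice (fun i : 'I_n.+1 => span_vs _ (svalP (kalgX ^+ i))).
pose M : 'M[k]_(n.+1, n) := \matrix_(i, j) nth 0 (cs i) j.
have [|d d_neq0 d_rel] := @span_dependent _ _ n (fun i => kalgX ^+ i)
    (fun j => to_kalg (nth (pzero R) vs j)) M.
  move=> i; apply: kalg_inj; case: (def_cs i) => size_cs ->.
  rewrite lincomb_kalg //.
  by congr sval; apply: eq_bigr => j _; rewrite mxE.
exists (\poly_(i < n.+1) d 0 (inord i)).
  apply: contra d_neq0 => /eqP d0; apply/eqP/rowP => j; rewrite mxE.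
  by have := congr1 (coefp j) d0; rewrite /= coef_poly ltn_ord coef0 inord_val.
by rewrite horner_alg_poly -[RHS]d_rel; apply: eq_bigr => i _; rewrite inord_val.
Qed.

Lemma morphism_horner_alg (f : R -> k) (p : {poly k}) :
  is_morphism f -> f (sval (horner_alg kalgX p)) = p.[f a].
Proof.
case=> fZ fD fM f0 f1.
have comm (x y : kalg) : pcomm (sval x) (sval y) by apply: kpoly_pcomm; apply: svalP.
elim/poly_ind: p => [|p c IHp]; first by rewrite rmorph0 f0 horner0.
rewrite rmorphD rmorphM /= horner_algX horner_algC.
rewrite (fD _ _ (comm (_ * kalgX) c%:A)) (fM _ _ (comm _ kalgX)).
by rewrite IHp fZ f1 mulr1 hornerMXaddC.
Qed.

Lemma morphisms_agree_at_algebraic (f g : R -> k) :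
    algebraic a -> is_morphism f -> is_morphism g ->
    (forall e : R, pidempotent e -> f e = g e) ->
  f a = g a.
Proof.
move=> alg_a mf mg fg; apply/eqP; apply: contraT => fa_neq_ga.
have [p p_neq0 pa0] := algebraic_annihilator alg_a.
have root_at h : is_morphism h -> root p (h a).
  by move=> mh; rewrite rootE -(morphism_horner_alg p mh) pa0; case: mh => _ _ _ ->.
have [u [/dvdpP [r def_u] u_fa u_ga]] :=
  separating_idempotent_poly p_neq0 (root_at f mf) (root_at g mg) fa_neq_ga.
pose e := horner_alg kalgX u.
have idem_e : e * e = e.
  by apply/eqP; rewrite -subr_eq0 -rmorphM -rmorphB def_u rmorphM /= pa0 mulr0.
have := fg (sval e) (congr1 sval idem_e).
by rewrite !morphism_horner_alg // u_fa u_ga => /eqP; rewrite oner_eq0.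
Qed.

End SingleGenerator.

Theorem lemma3p6 (k : closedFieldType) (R : PartialAlg k)
  (Halg : forall a : R, algebraic a)
  (f g : R -> k) (Hf : is_morphism f) (Hg : is_morphism g)
  (Hfg : forall e : R, pidempotent e -> f e = g e) :
  forall a : R, f a = g a.
Proof.
move=> a.
exact: (morphisms_agree_at_algebraic (morphism_one_neq0 Hf) (Halg a) Hf Hg Hfg).
Qed.
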